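(* Let $G$ be a finite group with identity $e$ and $H$ a normal subgroup of $G$ with $|H|=3$. Then the following two conditions are equivalent: (a) for every $x\in G\setminus H$, one has $x^2\in H$ and the coset $Hx$ contains an element of order at least $3$; (b) there exist $n\ge 0$ and an isomorphism $G\cong\mathbb{Z}_2^n\times\mathbb{Z}_3$ mapping $H$ onto the subgroup $\{(0,\dots,0,0),(0,\dots,0,1),(0,\dots,0,2)\}=\{0\}^n\times\mathbb{Z}_3$. *)

From mathcomp Require Import all_boot all_order all_algebra all_fingroup.
Set Implicit Arguments. Unset Strict Implicit. Unset Printing Implicit Defensive.

(* The group Z_2^n x Z_3, as the additive group of the finite Z-module
   'rV['Z_2]_n * 'Z_3 (group law = componentwise addition). *)
Definition Z2nZ3 (n : nat) : finGroupType := ('rV['Z_2]_n * 'Z_3)%type.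

Definition zero_Z3 (n : nat) : {set Z2nZ3 n} := [set u : Z2nZ3 n | u.1 == 0%R].

From mathcomp Require Import all_boot all_order all_algebra all_fingroup all_solvable.
Set Implicit Arguments. Unset Strict Implicit. Unset Printing Implicit Defensive.
Local Open Scope group_scope.
Import GRing.Theory FinRing.Theory.

(* Let y be an element of order at least 3 in a coset Hx outside H.  Its
   square is a nontrivial element of H, so it generates H, and y commutes with
   it; as H is abelian, H is central in G.  Since G/H has exponent 2, H is a
   central Hall subgroup, and a Schur-Zassenhaus complement K has all its
   squares in K :&: H = 1: thus G = K \x H with K elementary abelian, i.e.
   G is isomorphic to Z_2^n x Z_3.  There the only subgroup of order 3 is
   {0}^n x Z_3, so H is mapped onto it.  Conversely the condition is invariant
   under isomorphism, and Z_2^n x Z_3 satisfies it: the coset of x contains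
   the element with second coordinate 1. *)

Definition sqr_in_coset_ord_ge3 (gT : finGroupType) (G H : {set gT}) :=
  forall x, x \in G :\: H -> x ^+ 2 \in H /\ exists2 y, y \in H :* x & 3 <= #[y].

Lemma order_ge3_expg2_neq1 (gT : finGroupType) (y : gT) : 2 < #[y] -> y ^+ 2 != 1.
Proof. by rewrite -order_dvdn; apply: contraL => /dvdn_leq; rewrite -leqNgt; apply. Qed.

Section SqrInCosetOrdGe3.

Variable gT : finGroupType.
Implicit Types G H : {group gT}.

Lemma morphim_sqr_in_coset_ord_ge3 (rT : finGroupType) G H
    (f : {morphism G >-> rT}) :
  'injm f -> H \subset G ->
  sqr_in_coset_ord_ge3 G H -> sqr_in_coset_ord_ge3 (f @* G) (f @* H).
Proof.
move=> injf sHG condGH _ /setDP[/morphimP[x _ xG ->] fxH].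
have xH : x \notin H by apply: contra fxH; apply: mem_morphim.
have xGH : x \in G :\: H by rewrite inE xH xG.
have [x2H [_ /rcosetP[h hH ->] oy]] := condGH x xGH.
have hG := subsetP sHG h hH.
split; first by rewrite -morphX // (mem_morphim f (groupX 2 xG) x2H).
exists (f h * f x); first by rewrite mem_rcoset mulgK (mem_morphim f hG hH).
by rewrite -morphM // order_injm ?groupM.
Qed.

Lemma sqr_in_of_coset_ord_ge3 G H :
  H \subset G -> sqr_in_coset_ord_ge3 G H -> {in G, forall x, x ^+ 2 \in H}.
Proof.
move=> sHG condGH x xG; have [xH | xH] := boolP (x \in H); first exact: groupX.
by have [] := condGH x; rewrite ?inE ?xH.
Qed.

Lemma cent_of_sqr_in_coset_ord_ge3 G H :
  prime #|H| -> H \subset G -> sqr_in_coset_ord_ge3 G H -> G \subset 'C(H).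
Proof.
move=> prH sHG condGH; have cHH := cyclic_abelian (prime_cyclic prH).
apply/subsetP=> x xG; have [xH | xH] := boolP (x \in H).
  exact: subsetP cHH x xH.
have xGH : x \in G :\: H by rewrite inE xH xG.
have [_ [_ /rcosetP[h hH ->] oy]] := condGH x xGH.
have y2H : (h * x) ^+ 2 \in H.
  by rewrite (sqr_in_of_coset_ord_ge3 sHG condGH) ?groupM ?(subsetP sHG h hH).
have defH : H :=: <[(h * x) ^+ 2]>.
  by apply: nt_gen_prime; rewrite // !inE y2H order_ge3_expg2_neq1.
rewrite -(mulKg h x) groupM ?groupV ?(subsetP cHH h hH) //.
suff : h * x \in 'C(<[(h * x) ^+ 2]>) by rewrite -defH.
by rewrite cent_cycle; apply/cent1P; apply: commuteX.
Qed.

Lemma index_pnat2_of_sqr_in G H :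
  H <| G -> {in G, forall x, x ^+ 2 \in H} -> 2.-nat #|G : H|.
Proof.
case/andP=> sHG nHG sqrGH; rewrite -card_quotient //.
rewrite -[_.-nat _]/(2.-group (G / H)) -pnat_exponent.
apply: (@pnat_dvd _ 2) => //; apply/exponentP=> _ /morphimP[x Nx xG ->].
by rewrite -morphX //; apply: coset_id; apply: sqrGH.
Qed.

Lemma central_Hall_dprod_abelem2 G H :
  H <| G -> G \subset 'C(H) -> coprime #|H| #|G : H| ->
  {in G, forall x, x ^+ 2 \in H} -> exists2 K : {group gT}, K \x H = G & 2.-abelem K.
Proof.
move=> nsHG cGH coHG sqrGH; have [sHG nHG] := andP nsHG.
have hallH : Hall G H by rewrite /Hall sHG.
have [K /complP[tiHK defG]] := splitsP (SchurZassenhaus_split hallH nsHG).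
have sKG : K \subset G by rewrite -defG mulG_subr.
have cKH : K \subset 'C(H) := subset_trans sKG cGH.
exists K.
  by rewrite dprodE 1?centsC // ?(centC cKH) // setIC.
apply: exponent2_abelem; apply/exponentP=> k kK.
have : k ^+ 2 \in H :&: K by rewrite inE (groupX 2 kK) andbT sqrGH // (subsetP sKG k kK).
by rewrite tiHK => /set1P.
Qed.

End SqrInCosetOrdGe3.

Lemma Z2_addrr (a : 'Z_2) : (a + a = 0)%R.
Proof. by apply/val_inj; case: a => [[|[|//]] ?]. Qed.

Section Z2nZ3.

Variable n : nat.
Implicit Type u : Z2nZ3 n.

Lemma rV_Z2_addrr (a : 'rV['Z_2]_n) : (a + a = 0)%R.
Proof. by apply/rowP => i; rewrite !mxE Z2_addrr. Qed.

Lemma rV_Z2_abelem : 2.-abelem [set: 'rV['Z_2]_n].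
Proof.
apply: exponent2_abelem; apply/exponentP => a _.
by rewrite zmodXgE mulr2n rV_Z2_addrr.
Qed.

Lemma Z2nZ3_sqr_fst u : (u ^+ 2).1 = 0%R.
Proof. by rewrite expgS expg1 /= zmodMgE rV_Z2_addrr. Qed.

Lemma Z2nZ3_cube_fst u : (u ^+ 3).1 = u.1.
Proof. by rewrite !expgS expg0 mulg1 /= !zmodMgE addrA rV_Z2_addrr add0r. Qed.

Lemma Z2nZ3_order_ge3 u : u.2 != 0%R -> 2 < #[u].
Proof.
rewrite ltnNge; apply: contra => le_u2.
have /eqP/(congr1 snd) : u ^+ 2 == 1.
  by rewrite -order_dvdn; move: (order_gt0 u) le_u2; case: #[u] => [|[|[|]]].
rewrite expgS expg1 /= zmodMgE.
by case: u.2 => [[|[|[|]]] ?].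
Qed.

Lemma card_zero_Z3 : #|zero_Z3 n| = 3.
Proof.
have -> : zero_Z3 n = setX [set 0%R] [set: 'Z_3].
  by apply/setP => -[a b]; rewrite !inE andbT.
by rewrite cardsX cards1 cardsT card_ord.
Qed.

Lemma Z2nZ3_card3_subgroup (A : {group Z2nZ3 n}) : #|A| = 3 -> A :=: zero_Z3 n.
Proof.
move=> cardA; apply/eqP; rewrite eqEcard card_zero_Z3 cardA leqnn andbT.
apply/subsetP => a aA; have a3 : a ^+ 3 = 1 by rewrite -cardA expg_cardG.
by rewrite inE -Z2nZ3_cube_fst a3.
Qed.

Lemma Z2nZ3_sqr_in_coset_ord_ge3 : sqr_in_coset_ord_ge3 [set: Z2nZ3 n] (zero_Z3 n).
Proof.
move=> x _; split; first by rewrite inE Z2nZ3_sqr_fst.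
exists (((0%R, (1 - x.2)%R) : Z2nZ3 n) * x); first by rewrite mem_rcoset mulgK inE.
by apply: Z2nZ3_order_ge3; rewrite /= zmodMgE subrK oner_neq0.
Qed.

End Z2nZ3.

Lemma dprod_abelem2_Z3_isog (gT : finGroupType) (G K H : {group gT}) :
  K \x H = G -> 2.-abelem K -> #|H| = 3 -> G \isog [set: Z2nZ3 (logn 2 #|K|)].
Proof.
move=> defG abK cardH.
have isoK : K \isog [set: 'rV['Z_2]_(logn 2 #|K|)].
  rewrite (isog_abelem_card _ abK) rV_Z2_abelem cardsT card_mx card_ord mul1n.
  by rewrite eq_sym; apply/eqP; apply: card_pgroup; apply: abelem_pgroup abK.
have isoH : H \isog [set: 'Z_3].
  have prH : prime #|H| by rewrite cardH.
  rewrite (isog_cyclic_card _ (prime_cyclic prH)) cardsT card_ord cardH eqxx andbT.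
  by apply: prime_cyclic; rewrite cardsT card_ord.
have -> : [set: Z2nZ3 _] = setX [set: 'rV['Z_2]_(logn 2 #|K|)] [set: 'Z_3].
  by apply/setP => -[a b]; rewrite !inE.
apply: (isog_dprod defG (setX_dprod _ _)).
  exact: isog_trans isoK (isog_setX1 _ _).
exact: isog_trans isoH (isog_set1X _ _).
Qed.

Theorem lemma5p1 (gT : finGroupType) (G H : {group gT})
  (nHG : H <| G) (cardH : #|H| = 3) :
  (forall x, x \in G :\: H ->
     x ^+ 2 \in H /\ exists2 y, y \in H :* x & 3 <= #[y])
  <->
  (exists n : nat, exists f : {morphism G >-> Z2nZ3 n},
     isom G [set: Z2nZ3 n] f /\ f @* H = zero_Z3 n).
Proof.
have sHG := normal_sub nHG.
split=> [condGH | [n [f [/isomP[injf imf] fH]]]].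
  have prH : prime #|H| by rewrite cardH.
  have sqrGH := sqr_in_of_coset_ord_ge3 sHG condGH.
  have coHG : coprime #|H| #|G : H|.
    by rewrite coprime_sym (pnat_coprime (index_pnat2_of_sqr_in nHG sqrGH)) ?cardH.
  have cGH := cent_of_sqr_in_coset_ord_ge3 prH sHG condGH.
  have [K defG abK] := central_Hall_dprod_abelem2 nHG cGH coHG sqrGH.
  have /isogP[f injf imf] := dprod_abelem2_Z3_isog defG abK cardH.
  exists (logn 2 #|K|), f; split; first exact/isomP.
  by apply: Z2nZ3_card3_subgroup; rewrite card_injm.
rewrite -(morphim_invm injf (subxx G)) -(morphim_invm injf sHG).
apply: morphim_sqr_in_coset_ord_ge3; [exact: injm_invm | exact: morphimS |].
by have := @Z2nZ3_sqr_in_coset_ord_ge3 n; rewrite -imf -fH.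
Qed.
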